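(* Let $G$ and $H$ be two connected graphs of order $n$ with equal Laplacian spectrum. If $Z(G)\neq Z(H)$, then for every $k\geq 1$, $\vee_k G$ and $\vee_k H$ have equal Laplacian spectrum and $Z(\vee_k G)\neq Z(\vee_k H)$. Likewise, if $Z_{-}(G)\neq Z_{-}(H)$, then for every $k\geq 1$, $\vee_k G$ and $\vee_k H$ have equal Laplacian spectrum and $Z_{-}(\vee_k G)\neq Z_{-}(\vee_k H)$.
   Context: Graphs are finite, simple, undirected. The Laplacian matrix of $G$ is $L=D-A$ ($D$ the diagonal degree matrix, $A$ the adjacency matrix). The join $G\vee H$ is the disjoint union of $G$ and $H$ together with all edges $\{u,v\}$, $u\in V(G)$, $v\in V(H)$. For a connected graph $G$, define $\vee_0 G=G$ and $\vee_{k+1}G=(\vee_k G)\vee G$ for $k\geq 0$ (using a fresh copy of $G$ each time). The zero forcing number $Z(G)$ is the minimum size of a set $S\subseteq V(G)$ such that, if the vertices of $S$ are colored blue and all others white, repeated application of the rule ''a blue vertex with exactly one white neighbor forces that neighbor to become blue'' eventually makes every vertex blue. The skew zero forcing number $Z_{-}(G)$ is defined in the same way but with the rule ''any vertex (blue or white) that has exactly one white neighbor forces that neighbor to become blue''. *)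

From HB Require Import structures.
From mathcomp Require Import all_boot all_order all_algebra all_field.
Unset Printing Implicit Defensive.
Import Order.TTheory GRing.Theory Num.Theory.

Definition simple_graph {T : finType} (e : rel T) : Prop :=
  symmetric e /\ irreflexive e.

Definition connected_graph {T : finType} (e : rel T) : Prop :=
  forall x y : T, connect e x y.

Definition gjoin {T1 T2 : finType} (e1 : rel T1) (e2 : rel T2) : rel (T1 + T2)%type :=
  fun x y => match x, y with
             | inl a, inl b => e1 a b
             | inr a, inr b => e2 a b
             | _, _ => true
             end.

(* Vertex type of vee_k G, and vee_k G itself: vee_0 G = G, vee_{k+1} G = (vee_k G) v G. *)
Fixpoint vtype (T : finType) (k : nat) : finType :=
  match k with
  | 0 => T
  | k'.+1 => (vtype T k' + T)%type
  end.

Fixpoint iter_join {T : finType} (e : rel T) (k : nat) : rel (vtype T k) :=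
  match k return rel (vtype T k) with
  | 0 => e
  | k'.+1 => gjoin (@iter_join T e k') e
  end.

Local Open Scope ring_scope.
Definition laplacian {T : finType} (e : rel T) : 'M[algC]_#|T| :=
  \matrix_(i, j)
    ((i == j)%:R * (#|[set w | e (enum_val i) w]|)%:R
     - (e (enum_val i) (enum_val j))%:R).
Local Close Scope ring_scope.

(* Laplacian spectrum: the multiset of eigenvalues (with algebraic
   multiplicity), i.e. the multiplicity function x |-> mult. of x as a root
   of the characteristic polynomial of L. *)
Definition lap_spectrum {T : finType} (e : rel T) : algC -> nat :=
  fun x => mup x (char_poly (laplacian e)).

Definition zf_step {T : finType} (e : rel T) (B B' : {set T}) : bool :=
  [exists u, exists v,
    [&& u \in B, v \notin B, e u v,
        #|[set w | e u w & w \notin B]| == 1 & B' == v |: B]].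

Definition szf_step {T : finType} (e : rel T) (B B' : {set T}) : bool :=
  [exists u, exists v,
    [&& v \notin B, e u v,
        #|[set w | e u w & w \notin B]| == 1 & B' == v |: B]].

Definition zero_forcing_set {T : finType} (e : rel T) (S : {set T}) : bool :=
  connect (zf_step e) S setT.

Definition skew_zero_forcing_set {T : finType} (e : rel T) (S : {set T}) : bool :=
  connect (szf_step e) S setT.

(* Minimum size of such a set (setT always qualifies, so #|T| is a valid default). *)
Definition Zf {T : finType} (e : rel T) : nat :=
  \big[minn/#|T|]_(S : {set T} | zero_forcing_set e S) #|S|.

Definition Zskew {T : finType} (e : rel T) : nat :=
  \big[minn/#|T|]_(S : {set T} | skew_zero_forcing_set e S) #|S|.

(* The Laplacian of a join is a block matrix with off-diagonal blocks -J.
   Since the all-ones vector lies in the kernel of every Laplacian, a Schur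
   complement shows that the characteristic polynomial of L(A v B) depends
   only on those of L(A) and L(B), so joins preserve cospectrality.
   For graphs A, B without isolated vertices, and for the ordinary as well as
   the skew rule, Z(A v B) = min(|B| + Z(A), |A| + Z(B)).  Lifting a forcing set
   of A by all of B gives the upper bound.  Conversely, a forcing set either
   contains a whole side, and then projects to a forcing set of the other one,
   or its first forcing vertex sees every white vertex across, so there is
   exactly one of them and all neighbours of the forcing vertex are blue: one
   of these neighbours could have been left white.  Iterating,
   Z(v_k G) = k n + Z(G), so the forcing numbers of v_k G and v_k H differ as
   soon as those of G and H do. *)

From mathcomp Require Import all_boot all_order all_algebra all_field.
From mathcomp Require Import zify ring.
Set Implicit Arguments. Unset Strict Implicit. Unset Printing Implicit Defensive.
Import Order.TTheory GRing.Theory Num.Theory.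

Definition white_nbrs {T : finType} (e : rel T) (B : {set T}) (u : T) : {set T} :=
  [set w | e u w & w \notin B].

Section Forcing.
(* With [skew], the forcing vertex need not be blue (skew zero forcing). *)
Variable skew : bool.

Definition forces {T : finType} (e : rel T) (B : {set T}) (u v : T) : bool :=
  [&& skew || (u \in B), v \notin B, e u v & #|white_nbrs e B u| == 1].

Definition force_step {T : finType} (e : rel T) (B B' : {set T}) : bool :=
  [exists u, exists v, [&& skew || (u \in B), v \notin B, e u v,
                           #|white_nbrs e B u| == 1 & B' == v |: B]].

Definition forcing_set {T : finType} (e : rel T) (S : {set T}) : bool :=
  connect (force_step e) S setT.

Definition forcing_number {T : finType} (e : rel T) : nat :=
  \big[minn/#|T|]_(S : {set T} | forcing_set e S) #|S|.

Variables (T : finType) (e : rel T).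
Implicit Types (B S : {set T}) (u v w : T).

Lemma force_stepP B B' :
  reflect (exists u v, forces e B u v /\ B' = v |: B) (force_step e B B').
Proof.
apply: (iffP existsP) => [[u /existsP[v /and5P[? ? ? ? /eqP->]]] | ].
  by exists u, v; split; first exact/and4P.
case=> u [v [/and4P[? ? ? ?] ->]].
by exists u; apply/existsP; exists v; apply/and5P.
Qed.

Lemma forcing_setT : forcing_set e setT.
Proof. exact: connect0. Qed.

Lemma forcing_set_step B u v : forces e B u v -> forcing_set e (v |: B) -> forcing_set e B.
Proof. by move=> uv; apply/connect_trans/connect1/force_stepP; exists u, v. Qed.

Lemma forces_superset B B' u v :
  B \subset B' -> v \notin B' -> forces e B u v -> forces e B' u v.
Proof.
move=> sBB' vB' /and4P[uB _ euv /cards1P[w Ew]]; apply/and4P; split=> //.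
  by case: skew uB => //= /(subsetP sBB').
have vw : v = w by apply/set1P; rewrite -Ew inE euv (contra (subsetP sBB' v)).
have sub : white_nbrs e B' u \subset [set v].
  by rewrite vw -Ew; apply/subsetP => x; rewrite !inE => /andP[-> /(contra (subsetP sBB' x))].
suff -> : white_nbrs e B' u = [set v] by rewrite cards1.
by apply/eqP; rewrite eqEsubset sub sub1set inE euv vB'.
Qed.

Lemma forcing_set_superset B B' : B \subset B' -> forcing_set e B -> forcing_set e B'.
Proof.
move=> + /connectP[p]; elim: p B B' => [|C p IH] B B' /= sBB'.
  by move=> _ BT; move: sBB'; rewrite -BT subTset => /eqP->; apply: forcing_setT.
case/andP=> /force_stepP[u [v [uv ->]]] pC lastC.
have sCv : v |: B \subset v |: B' by apply: setUS.
have [vB'|vB'] := boolP (v \in B').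
  by apply: IH pC lastC; rewrite subUset sub1set vB'.
exact: forcing_set_step (forces_superset sBB' vB' uv) (IH _ _ sCv pC lastC).
Qed.

Lemma forcing_set_forcer S : forcing_set e S -> S != setT -> exists u v, forces e S u v.
Proof.
case/connectP=> -[|C p] /=; first by move=> _ <-; rewrite eqxx.
by case/andP=> /force_stepP[u [v [uv _]]] _ _ _; exists u, v.
Qed.

Lemma forcing_set_setC1 u w : e u w -> u != w -> forcing_set e [set~ w].
Proof.
move=> euw uw; apply: (@forcing_set_step _ u w); last by rewrite setUCr forcing_setT.
apply/and4P; split; rewrite ?inE ?eqxx ?uw ?orbT //.
apply/cards1P; exists w; apply/setP=> x; rewrite !inE negbK.
by case: eqP => [->|]; rewrite ?euw ?andbF.
Qed.

Lemma forcing_set_setD1 S u v : skew || (u \in S) -> u != v -> e u v ->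
  white_nbrs e S u = set0 -> forcing_set e S -> forcing_set e (S :\ v).
Proof.
move=> uS uv euv noW zS; have vS : v \in S.
  by apply: contraT => vS; rewrite -[false](in_set0 v) -noW inE euv vS.
apply: (@forcing_set_step _ u v); last by rewrite setD1K.
apply/and4P; split=> //; first by rewrite in_setD1 uv.
  by rewrite !inE eqxx.
apply/cards1P; exists v; apply/setP=> x; rewrite !inE negb_and negbK.
have [->|_] := eqVneq x v; first by rewrite euv.
by move/setP/(_ x): noW; rewrite !inE.
Qed.

Lemma forcing_number_le S : forcing_set e S -> forcing_number e <= #|S|.
Proof. exact: (@bigmin_le_cond _ nat _ #|T| S (forcing_set e) (fun S => #|S|)). Qed.

Lemma forcing_number_le_card : forcing_number e <= #|T|.
Proof. by rewrite -cardsT forcing_number_le ?forcing_setT. Qed.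

Lemma min_forcing_set : exists2 S, forcing_set e S & #|S| = forcing_number e.
Proof.
have [S zS minS] := @eq_bigmin _ nat {set T} #|T| setT (forcing_set e) (fun S => #|S|)
  forcing_setT (fun S _ => max_card S).
by exists S; last exact: esym minS.
Qed.

End Forcing.

Lemma Zf_forcing_number (T : finType) (e : rel T) : Zf e = forcing_number false e.
Proof. by []. Qed.

Lemma Zskew_forcing_number (T : finType) (e : rel T) : Zskew e = forcing_number true e.
Proof. by []. Qed.

Section Isomorphism.
Variables (skew : bool) (T T' : finType) (e : rel T) (e' : rel T').
Variables (f : T -> T') (g : T' -> T).
Hypotheses (fK : cancel f g) (gK : cancel g f) (hom : forall x y, e' (f x) (f y) = e x y).

Lemma card_preimset_can (S : {set T'}) : #|f @^-1: S| = #|S|.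
Proof. by rewrite -(can2_imset_pre _ gK fK) (card_imset _ (can_inj gK)). Qed.

Lemma white_nbrs_preimset (S : {set T'}) u :
  white_nbrs e (f @^-1: S) (g u) = f @^-1: white_nbrs e' S u.
Proof. by apply/setP=> x; rewrite !inE -hom gK. Qed.

Lemma forces_preimset (S : {set T'}) u v :
  forces skew e' S u v -> forces skew e (f @^-1: S) (g u) (g v).
Proof.
case/and4P=> uS vS euv wu; apply/and4P.
by rewrite white_nbrs_preimset card_preimset_can !inE -hom !gK.
Qed.

Lemma forcing_set_preimset (S : {set T'}) :
  forcing_set skew e' S -> forcing_set skew e (f @^-1: S).
Proof.
case/connectP=> p; elim: p S => [|C p IH] S /=.
  by move=> _ <-; rewrite preimsetT forcing_setT.
case/andP=> /force_stepP[u [v [uv ->]]] pC lastC.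
apply: forcing_set_step (forces_preimset uv) _.
have -> : g v |: f @^-1: S = f @^-1: (v |: S).
  by apply/setP=> x; rewrite !inE (can2_eq fK gK).
exact: IH pC lastC.
Qed.

Lemma forcing_number_le_iso : forcing_number skew e <= forcing_number skew e'.
Proof.
have [S zS <-] := min_forcing_set skew e'.
by rewrite -card_preimset_can forcing_number_le ?forcing_set_preimset.
Qed.

End Isomorphism.

Lemma eq_forcing_number (skew : bool) (T : finType) (e e' : rel T) :
  e =2 e' -> forcing_number skew e = forcing_number skew e'.
Proof.
move=> ee'; apply/eqP; rewrite eqn_leq.
by rewrite !(@forcing_number_le_iso _ _ _ _ _ id id) // => x y; rewrite ee'.
Qed.

Definition no_isolated {T : finType} (e : rel T) : Prop := forall x, exists y, e x y.

Lemma connected_no_isolated (T : finType) (e : rel T) :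
  connected_graph e -> 1 < #|T| -> no_isolated e.
Proof.
move=> conn T2 x; have [y yx] : exists y, y != x.
  have /card_gt0P[y] : 0 < #|[set~ x]| by rewrite cardsC1; lia.
  by rewrite !inE; exists y.
case/connectP: (conn x y) => -[|z p] /=; first by move=> _ yx'; rewrite yx' eqxx in yx.
by case/andP=> xz _ _; exists z.
Qed.

Section Join.
Variables (skew : bool) (T1 T2 : finType) (eA : rel T1) (eB : rel T2).
Local Notation J := (gjoin eA eB).
Implicit Types (S : {set T1 + T2}) (R : {set T1}).

Definition lpart (S : {set T1 + T2}) : {set T1} := [set a | inl a \in S].
Definition rpart (S : {set T1 + T2}) : {set T2} := [set b | inr b \in S].
Definition lift_l (R : {set T1}) : {set T1 + T2} :=
  [set x | if x is inl a then a \in R else true].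

Lemma card_sum_set (P : pred (T1 + T2)) :
  #|[set x | P x]| = #|[set a | P (inl a)]| + #|[set b | P (inr b)]|.
Proof. by rewrite !cardsE -!sum1_card big_sumType. Qed.

Lemma card_lpart_rpart S : #|S| = #|lpart S| + #|rpart S|.
Proof. by rewrite -card_sum_set; apply: eq_card => x; rewrite inE. Qed.

Lemma card_white_nbrs_inl S a :
  #|white_nbrs J S (inl a)| = #|white_nbrs eA (lpart S) a| + #|~: rpart S|.
Proof. by rewrite card_sum_set; congr (_ + _); apply: eq_card => x; rewrite !inE. Qed.

Lemma card_white_nbrs_inr S b :
  #|white_nbrs J S (inr b)| = #|~: lpart S| + #|white_nbrs eB (rpart S) b|.
Proof. by rewrite card_sum_set; congr (_ + _); apply: eq_card => x; rewrite !inE. Qed.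

Lemma forcing_set_lift_l R : forcing_set skew eA R -> forcing_set skew J (lift_l R).
Proof.
case/connectP=> p; elim: p R => [|C p IH] R /=.
  move=> _ <-; rewrite (_ : lift_l _ = setT) ?forcing_setT //.
  by apply/setP=> -[x|x]; rewrite !inE.
case/andP=> /force_stepP[u [v [/and4P[uR vR euv wu] ->]]] pC lastC.
apply: (@forcing_set_step _ _ _ _ (inl u) (inl v)).
  apply/and4P; split; rewrite ?inE //.
  rewrite card_white_nbrs_inl (_ : ~: rpart _ = set0) ?cards0 ?addn0.
    by rewrite (_ : lpart _ = R) //; apply/setP=> x; rewrite !inE.
  by apply/setP=> x; rewrite !inE.
rewrite (_ : _ |: _ = lift_l (v |: R)); first exact: IH pC lastC.
by apply/setP=> -[x|x]; rewrite !inE.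
Qed.

Lemma forcing_number_gjoin_le : forcing_number skew J <= #|T2| + forcing_number skew eA.
Proof.
have [R zR <-] := min_forcing_set skew eA.
apply: leq_trans (forcing_number_le (forcing_set_lift_l zR)) _.
rewrite card_lpart_rpart addnC leq_add ?max_card //.
by apply: subset_leq_card; apply/subsetP=> x; rewrite !inE.
Qed.

Hypotheses (symA : symmetric eA) (irrA : irreflexive eA) (noisoA : no_isolated eA).

Lemma forcing_set_lpart S :
  (forall b, inr b \in S) -> forcing_set skew J S -> forcing_set skew eA (lpart S).
Proof.
move=> + /connectP[p]; elim: p S => [|C p IH] S /= allR.
  by move=> _ <-; rewrite (_ : lpart _ = setT) ?forcing_setT //; apply/setP=> x; rewrite !inE.
case/andP=> /force_stepP[u [[a'|b'] [/and4P[uS vS euv /eqP wu] ->]]] pC lastC; last first.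
  by rewrite allR in vS.
have a'L : a' \in ~: lpart S by rewrite !inE.
case: u uS euv wu => [a|b] uS euv wu.
  apply: (@forcing_set_step _ _ _ _ a a').
    apply/and4P; split; rewrite ?inE //.
    rewrite -wu card_white_nbrs_inl (_ : ~: rpart S = set0) ?cards0 ?addn0 //.
    by apply/setP=> x; rewrite !inE allR.
  rewrite (_ : _ |: _ = lpart (inl a' |: S)); last by apply/setP=> x; rewrite !inE.
  by apply: IH pC lastC => b; rewrite !inE allR orbT.
have /eqP L1 : [set a'] == ~: lpart S.
  by rewrite eqEcard sub1set a'L cards1 -wu card_white_nbrs_inr leq_addr.
have [m a'm] := noisoA a'.
rewrite -[lpart S]setCK -L1; apply: (@forcing_set_setC1 _ _ _ m).
  by rewrite symA.
by apply: contraTneq a'm => ->; rewrite irrA.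
Qed.

Lemma forcing_number_gjoin_ge S x v : forcing_set skew J S -> forces skew J S (inl x) v ->
  #|T2| + forcing_number skew eA <= #|S|.
Proof.
move=> zS /and4P[xS vS exv /eqP wx].
have Rsize : #|rpart S| + #|~: rpart S| = #|T2| := cardsC _.
rewrite card_white_nbrs_inl in wx; rewrite card_lpart_rpart.
have [/eqP noWR | someWR] := eqVneq #|~: rpart S| 0.
  suff /forcing_number_le : forcing_set skew eA (lpart S) by lia.
  apply: forcing_set_lpart zS => b; move: noWR; rewrite cards_eq0 => /eqP/setP/(_ b).
  by rewrite !inE => /negbFE.
have noW : white_nbrs eA (lpart S) x = set0 by apply: cards0_eq; lia.
case: v vS exv => [a|q] vS /= exv.
  by have := in_set0 a; rewrite -noW !inE exv vS.
have Rq : [set q] = ~: rpart S.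
  by apply/eqP; rewrite eqEcard sub1set !inE vS cards1; lia.
have zL : forcing_set skew eA (lpart S).
  rewrite (_ : lpart S = lpart (inr q |: S)); last by apply/setP=> a; rewrite !inE.
  apply: forcing_set_lpart; last exact: forcing_set_superset (subsetUr _ _) zS.
  move=> b; move/setP/(_ b): Rq; rewrite !inE /=.
  by case: eqP => [->|_ /esym /negbFE ->]; rewrite ?eqxx ?orbT.
have [y xy] := noisoA x.
have yL : y \in lpart S by apply: contraT => yL; rewrite -[false](in_set0 y) -noW inE xy.
have x_y : x != y by apply: contraTneq xy => ->; rewrite irrA.
have := forcing_number_le (forcing_set_setD1 (v := y) _ x_y xy noW zL).
by rewrite -Rsize -Rq cards1 inE xS (cardsD1 y (lpart S)) yL => /(_ isT); lia.
Qed.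

End Join.

Definition swap_sum {T1 T2 : finType} (x : T1 + T2) : T2 + T1 :=
  match x with inl a => inr a | inr b => inl b end.

Lemma swap_sumK (T1 T2 : finType) : cancel (@swap_sum T1 T2) swap_sum.
Proof. by case. Qed.

Lemma gjoin_swap (T1 T2 : finType) (eA : rel T1) (eB : rel T2) x y :
  gjoin eB eA (swap_sum x) (swap_sum y) = gjoin eA eB x y.
Proof. by case: x; case: y. Qed.

Section JoinFormula.
Variables (skew : bool) (T1 T2 : finType) (eA : rel T1) (eB : rel T2).
Hypotheses (symA : symmetric eA) (irrA : irreflexive eA) (noisoA : no_isolated eA).
Hypotheses (symB : symmetric eB) (irrB : irreflexive eB) (noisoB : no_isolated eB).

Lemma forcing_number_gjoin : forcing_number skew (gjoin eA eB) =
  minn (#|T2| + forcing_number skew eA) (#|T1| + forcing_number skew eB).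
Proof.
have swapK := @swap_sumK T2 T1; have swapK' := @swap_sumK T1 T2.
have upperB : forcing_number skew (gjoin eA eB) <= #|T1| + forcing_number skew eB.
  apply: leq_trans (forcing_number_le_iso skew swapK' swapK (gjoin_swap eA eB)) _.
  exact: forcing_number_gjoin_le.
apply/eqP; rewrite eqn_leq leq_min forcing_number_gjoin_le upperB /=.
have [S zS <-] := min_forcing_set skew (gjoin eA eB).
have [->|SnT] := eqVneq S setT.
  by rewrite geq_min cardsT card_sum [#|T1| + _]addnC leq_add2l forcing_number_le_card.
have [[x|y] [v uv]] := forcing_set_forcer zS SnT.
  by rewrite geq_min (forcing_number_gjoin_ge symA irrA noisoA zS uv).
rewrite geq_min -(card_preimset_can swapK swapK') orbC.
rewrite (@forcing_number_gjoin_ge skew T2 T1 eB eA symB irrB noisoB _ y (swap_sum v)) //.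
  exact: forcing_set_preimset swapK swapK' (gjoin_swap eB eA) _ zS.
exact: forces_preimset swapK swapK' (gjoin_swap eB eA) _ _ _ uv.
Qed.

End JoinFormula.

Section IteratedJoin.
Variables (T : finType) (e : rel T).
Hypotheses (sym : symmetric e) (irr : irreflexive e) (noiso : no_isolated e).

Lemma iter_join_graph k : [/\ symmetric (iter_join e k), irreflexive (iter_join e k)
  & no_isolated (iter_join e k)].
Proof.
elim: k => [|k [symk irrk noisok]] //=; split.
- by move=> [x|x] [y|y] //=; rewrite ?symk ?sym.
- by move=> [x|x] //=; rewrite ?irrk ?irr.
- move=> [x|x]; first by have [y] := noisok x; exists (inl y).
  by have [y] := noiso x; exists (inr y).
Qed.

Lemma card_vtype k : #|vtype T k| = k.+1 * #|T|.
Proof. by elim: k => [|k IH] /=; rewrite ?mul1n // card_sum IH mulSn addnC. Qed.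

Lemma forcing_number_iter_join skew k :
  forcing_number skew (iter_join e k) = k * #|T| + forcing_number skew e.
Proof.
elim: k => [|k IH] //=; have [symk irrk noisok] := iter_join_graph k.
by rewrite forcing_number_gjoin // IH card_vtype mulSn addnA minnn.
Qed.

End IteratedJoin.

Section SumEnum.
Variables (T1 T2 : finType).
Local Notation cast := (cast_ord (esym (card_sum T1 T2))).

Lemma enum_sumE : enum {: T1 + T2} = map inl (enum T1) ++ map inr (enum T2).
Proof. by rewrite !enumT [in LHS]unlock. Qed.

Lemma enum_val_lshift (a : 'I_#|T1|) :
  enum_val (cast (lshift #|T2| a)) = inl (enum_val a) :> T1 + T2.
Proof.
rewrite (enum_val_nth (inl (enum_val a))) enum_sumE nth_cat size_map -cardE /= ltn_ord.
by rewrite (nth_map (enum_val a)) -?cardE // -enum_val_nth.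
Qed.

Lemma enum_val_rshift (b : 'I_#|T2|) :
  enum_val (cast (rshift #|T1| b)) = inr (enum_val b) :> T1 + T2.
Proof.
rewrite (enum_val_nth (inr (enum_val b))) enum_sumE nth_cat size_map -cardE /=.
by rewrite ltnNge leq_addr addKn (nth_map (enum_val b)) -?cardE // -enum_val_nth.
Qed.

End SumEnum.

Section Laplacian.
Local Open Scope ring_scope.

Definition lap_coef {T : finType} (e : rel T) (u w : T) : algC :=
  (u == w)%:R * #|[set z | e u z]|%:R - (e u w)%:R.

Lemma laplacianE (T : finType) (e : rel T) i j :
  laplacian e i j = lap_coef e (enum_val i) (enum_val j).
Proof. by rewrite mxE /lap_coef (inj_eq enum_val_inj). Qed.

Lemma laplacian_const1 (T : finType) (e : rel T) m :
  laplacian e *m (const_mx 1 : 'M_(#|T|, m)) = 0.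
Proof.
apply/matrixP=> i j; rewrite !mxE.
under eq_bigr do rewrite [X in _ * X]mxE mulr1 laplacianE.
rewrite -(big_enum_val (lap_coef e (enum_val i))) /lap_coef sumrB.
rewrite (bigD1 (enum_val i)) //= eqxx mul1r big1 ?addr0 => [|y /negbTE]; last first.
  by rewrite eq_sym => ->; rewrite mul0r.
apply/eqP; rewrite subr_eq0 -natr_sum; apply/eqP; congr _%:R.
rewrite -sum1_card [LHS]big_mkcond [RHS]big_mkcond /=.
by apply: eq_bigr => x _; rewrite !inE; case: (e _ x).
Qed.

Lemma laplacian_gjoin (T1 T2 : finType) (eA : rel T1) (eB : rel T2) :
  let cs := esym (card_sum T1 T2) in
  laplacian (gjoin eA eB) = castmx (cs, cs)
    (block_mx (laplacian eA + #|T2|%:R%:M) (- const_mx 1)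
              (- const_mx 1) (laplacian eB + #|T1|%:R%:M)).
Proof.
move=> cs; apply/matrixP=> i j; rewrite castmxE /=.
set k := cast_ord _ i; set l := cast_ord _ j.
have -> : i = cast_ord cs k by apply: val_inj.
have -> : j = cast_ord cs l by apply: val_inj.
rewrite laplacianE /lap_coef card_sum_set /=.
rewrite -(splitK k) -(splitK l); case: (split k) => [a|b]; case: (split l) => [a'|b'];
  rewrite ?enum_val_lshift ?enum_val_rshift ?block_mxEul ?block_mxEur ?block_mxEdl
          ?block_mxEdr !mxE /= ?mul0r ?sub0r //.
- rewrite (inj_eq inl_inj) (inj_eq enum_val_inj) cardsT natrD.
  by case: (a == a'); rewrite ?mulr1n ?mulr0n; ring.
- rewrite (inj_eq inr_inj) (inj_eq enum_val_inj) cardsT natrD.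
  by case: (b == b'); rewrite ?mulr1n ?mulr0n; ring.
Qed.

End Laplacian.

Section CharPoly.
Local Open Scope ring_scope.

Lemma char_poly_castmx (R : comNzRingType) m n (eq_mn : m = n) (M : 'M[R]_m) :
  char_poly (castmx (eq_mn, eq_mn) M) = char_poly M.
Proof. by case: n / eq_mn; rewrite castmx_id. Qed.

Lemma horner_char_poly (R : comNzRingType) n (A : 'M[R]_n) x :
  (char_poly A).[x] = \det (x%:M - A).
Proof.
rewrite -[_.[x]]horner_evalE -det_map_mx; congr (\det _).
by apply/matrixP=> i j; rewrite !mxE /= ?horner_evalE; case: (i == j); rewrite ?hornerE.
Qed.

Lemma poly_eq_except (R : numDomainType) (p q : {poly R}) (c : R) :
  (forall x, x != c -> p.[x] = q.[x]) -> p = q.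
Proof.
move=> pq; apply/eqP; rewrite -subr_eq0; apply/eqP.
pose rs := [seq c + i.+1%:R | i <- iota 0 (size (p - q))].
apply: (@roots_geq_poly_eq0 _ _ rs); last by rewrite size_map size_iota.
  apply/allP=> y /mapP[i _ ->]; rewrite /root hornerD hornerN pq ?subrr //.
  by rewrite -subr_eq0 addrC addKr pnatr_eq0.
by rewrite map_inj_uniq ?iota_uniq // => i j /addrI /eqP; rewrite eqr_nat => /eqP[].
Qed.

Lemma monic_eq_mup (F : closedFieldType) (p q : {poly F}) :
  p \is monic -> q \is monic -> (forall x, mup x p = mup x q) -> p = q.
Proof.
move=> /monicP p1 /monicP q1 pq.
have [r Er] := closed_field_poly_normal p; have [s Es] := closed_field_poly_normal q.
rewrite p1 scale1r in Er; rewrite q1 scale1r in Es.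
rewrite Er Es; apply: perm_big; apply/allP=> x _ /=; apply/eqP.
by rewrite -!mu_prod_XsubC -Er -Es pq.
Qed.

End CharPoly.

Section BlockDet.
Variable F : fieldType.
Local Open Scope ring_scope.

Lemma mul_const1 m n p :
  (const_mx 1 : 'M[F]_(m, n)) *m (const_mx 1 : 'M_(n, p)) = n%:R *: const_mx 1.
Proof.
apply/matrixP=> i j; rewrite !mxE.
by under eq_bigr do rewrite !mxE mulr1; rewrite sumr_const card_ord mulr1.
Qed.

(* Right-multiplying by [[1, -J/a], [0, 1]] clears the upper-right block. *)
Lemma det_block_const1_l n1 n2 (A : 'M[F]_n1) (B : 'M[F]_n2) (a : F) : a != 0 ->
  A *m (const_mx 1 : 'M_(n1, n2)) = a *: const_mx 1 ->
  \det (block_mx A (const_mx 1) (const_mx 1) B) =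
  \det A * \det (B - (n1%:R / a) *: const_mx 1).
Proof.
move=> a0 AJ; set N := block_mx 1%:M ((- a^-1) *: (const_mx 1 : 'M_(n1, n2))) 0 1%:M.
have detN : \det N = 1 by rewrite det_ublock !det1 mulr1.
transitivity (\det (block_mx A (const_mx 1) (const_mx 1) B *m N)).
  by rewrite det_mulmx detN mulr1.
rewrite mulmx_block !mulmx1 !mulmx0 !addr0.
rewrite -!scalemxAr AJ mul_const1 !scalerA mulNr mulVf // scaleN1r addNr det_lblock.
by rewrite addrC mulNr scaleNr [_^-1 * _]mulrC.
Qed.

Lemma det_block_const1_r n1 n2 (A : 'M[F]_n1) (B : 'M[F]_n2) (b : F) : b != 0 ->
  B *m (const_mx 1 : 'M_(n2, n1)) = b *: const_mx 1 ->
  \det (block_mx A (const_mx 1) (const_mx 1) B) =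
  \det (A - (n2%:R / b) *: const_mx 1) * \det B.
Proof.
move=> b0 BJ; set N := block_mx 1%:M 0 ((- b^-1) *: (const_mx 1 : 'M_(n2, n1))) 1%:M.
have detN : \det N = 1 by rewrite det_lblock !det1 mulr1.
transitivity (\det (block_mx A (const_mx 1) (const_mx 1) B *m N)).
  by rewrite det_mulmx detN mulr1.
rewrite mulmx_block !mulmx1 !mulmx0 ?addr0 ?add0r.
rewrite -!scalemxAr BJ mul_const1 !scalerA !mulNr mulVf // scaleN1r addrN det_ublock.
by rewrite scaleNr [_^-1 * _]mulrC.
Qed.

End BlockDet.

Section LaplacianJoinCharPoly.
Variables (T1 T2 : finType).
Local Open Scope ring_scope.

Lemma laplacian_shift_const1 (T : finType) (e : rel T) m (a : algC) :
  (a%:M - laplacian e) *m (const_mx 1 : 'M_(#|T|, m)) = a *: const_mx 1.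
Proof. by rewrite mulmxBl mul_scalar_mx laplacian_const1 subr0. Qed.

Lemma horner_char_poly_gjoin (eA : rel T1) (eB : rel T2) x :
  (char_poly (laplacian (gjoin eA eB))).[x] =
  \det (block_mx ((x - #|T2|%:R)%:M - laplacian eA) (const_mx 1)
                 (const_mx 1) ((x - #|T1|%:R)%:M - laplacian eB)).
Proof.
rewrite laplacian_gjoin char_poly_castmx horner_char_poly.
rewrite (scalar_mx_block #|T1| #|T2| x) opp_block_mx add_block_mx !sub0r !opprK.
by congr (\det (block_mx _ _ _ _)); rewrite raddfB opprD addrA [RHS]addrAC.
Qed.

Lemma char_poly_laplacian_gjoin (eA eA' : rel T1) (eB eB' : rel T2) :
  char_poly (laplacian eA) = char_poly (laplacian eA') ->
  char_poly (laplacian eB) = char_poly (laplacian eB') ->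
  char_poly (laplacian (gjoin eA eB)) = char_poly (laplacian (gjoin eA' eB')).
Proof.
move=> AA' BB'; transitivity (char_poly (laplacian (gjoin eA' eB))).
  apply: (@poly_eq_except _ _ _ #|T2|%:R) => x; rewrite -subr_eq0 => x0.
  rewrite !horner_char_poly_gjoin !(det_block_const1_l _ x0 (laplacian_shift_const1 _ _ _)).
  by rewrite -!horner_char_poly AA'.
apply: (@poly_eq_except _ _ _ #|T1|%:R) => x; rewrite -subr_eq0 => x0.
rewrite !horner_char_poly_gjoin !(det_block_const1_r _ x0 (laplacian_shift_const1 _ _ _)).
by rewrite -!horner_char_poly BB'.
Qed.

End LaplacianJoinCharPoly.

Lemma char_poly_laplacian_iter_join (T : finType) (G H : rel T) k :
  char_poly (laplacian G) = char_poly (laplacian H) ->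
  char_poly (laplacian (iter_join G k)) = char_poly (laplacian (iter_join H k)).
Proof. by move=> GH; elim: k => [|k IH] //=; apply: char_poly_laplacian_gjoin. Qed.

Theorem theorem4p6 (n : nat) (G H : rel 'I_n) :
  simple_graph G -> simple_graph H ->
  connected_graph G -> connected_graph H ->
  lap_spectrum G = lap_spectrum H ->
  (Zf G <> Zf H ->
     forall k : nat, (1 <= k)%N ->
       lap_spectrum (iter_join G k) = lap_spectrum (iter_join H k) /\
       Zf (iter_join G k) <> Zf (iter_join H k)) /\
  (Zskew G <> Zskew H ->
     forall k : nat, (1 <= k)%N ->
       lap_spectrum (iter_join G k) = lap_spectrum (iter_join H k) /\
       Zskew (iter_join G k) <> Zskew (iter_join H k)).
Proof.
move=> [symG irrG] [symH irrH] connG connH specGH.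
have cpGH : char_poly (laplacian G) = char_poly (laplacian H).
  by apply: monic_eq_mup; rewrite ?char_poly_monic // => x; apply: (congr1 (@^~ x) specGH).
have spec_k k : lap_spectrum (iter_join G k) = lap_spectrum (iter_join H k).
  by rewrite /lap_spectrum (char_poly_laplacian_iter_join k cpGH).
have [n_le1 | n_gt1] := leqP n 1.
  have GH : G =2 H.
    move=> x y; have -> : y = x by apply: ord_inj; have := ltn_ord x; have := ltn_ord y; lia.
    by rewrite irrG irrH.
  by rewrite Zf_forcing_number Zskew_forcing_number !(eq_forcing_number _ GH).
have [noisoG noisoH] : no_isolated G /\ no_isolated H.
  by rewrite -(card_ord n) in n_gt1; split; apply: connected_no_isolated.
have Z_k skew k : forcing_number skew G <> forcing_number skew H ->
    forcing_number skew (iter_join G k) <> forcing_number skew (iter_join H k).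
  by rewrite !forcing_number_iter_join // => ZGH /addnI.
rewrite !Zf_forcing_number !Zskew_forcing_number.
by split=> ZGH k _; (split; [apply: spec_k | exact: Z_k _ _ ZGH]).
Qed.
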